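(* In the setting described in the context, let $M(f,g)=E\big(\langle f,T_{s(Y)}g\rangle^2_{\mathcal H_U}\big)$. The minimization defining the CP-sequence of $s(Y)$ is equivalent to the following sequence of maximization problems: Step 1: maximize $M(f,g)$ subject to $\|f\|_{\mathcal H_U}=1$ and $\|g\|_{\mathcal H_V}=1$; Step $k$ ($k=2,\ldots,d$): maximize $M(f,g)$ subject to $\|f\|_{\mathcal H_U}=1$, $\langle f,f_i\rangle_{\mathcal H_U}=0$ for $i=1,\ldots,k-1$, $\|g\|_{\mathcal H_V}=1$, $\langle g,g_i\rangle_{\mathcal H_V}=0$ for $i=1,\ldots,k-1$, where $(f_i,g_i)$, $i=1,\ldots,k-1$, are the solutions obtained in Steps $1$ through $k-1$.
   Context: Let $(\Omega,\mathcal F,P)$ be a probability space, $X:\Omega\to\mathbb R^{p\times q}$ a random matrix, $Y$ a random element of a measurable space $\Omega_Y$ with distribution $P_Y$, $r=\min(p,q)$. Assume with probability one: $\operatorname{rank}X=r$; the first components of the left and right singular vectors of $X$ are nonzero; the nonzero singular values of $X$ are simple. For $x\in\mathbb R^{p\times q}$ write $x=\sum_{i=1}^r\lambda_i(x)U_i^0(x)V_i^0(x)^\top$ (SVD, $\lambda_i(x)>0$, first component of $U_i^0(x)$ positive) and set $U_i(x)=\lambda_i(x)^{1/2}U_i^0(x)$, $V_i(x)=\lambda_i(x)^{1/2}V_i^0(x)$. Let $\kappa_U,\kappa_V,\kappa_Y$ be positive definite kernels on $\mathbb R^p,\mathbb R^q,\Omega_Y$; $\mathcal H_U,\mathcal H_V,\mathcal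 H_Y$ are the subspaces of their RKHSs spanned by centered kernel functions $\kappa_U(\cdot,u)-E\kappa_U(\cdot,U)$, $\kappa_V(\cdot,v)-E\kappa_V(\cdot,V)$, $\kappa_Y(\cdot,y)-E\kappa_Y(\cdot,Y)$ (Bochner means). $\mathcal H_U\otimes\mathcal H_V$ is the completion of $\operatorname{span}\{fg\}$, $fg(u,v)=f(u)g(v)$, with $\langle f_1g_1,f_2g_2\rangle_\otimes=\langle f_1,f_2\rangle_{\mathcal H_U}\langle g_1,g_2\rangle_{\mathcal H_V}$. Feature map $F(X)=\sum_{i=1}^r[\kappa_U(\cdot,U_i(X))-E\kappa_U(\cdot,U_i(X))][\kappa_V(\cdot,V_i(X))-E\kappa_V(\cdot,V_i(X))]$. For Hilbert spaces, $h_1\otimes h_2$ is the operator $g\mapsto h_1\langle h_2,g\rangle$. Assume $E\|F(X)\|_\otimes^2<\infty$, $E[\kappa_Y(Y,Y)]<\infty$; $\Sigma_{FF}=E[F(X)\otimes F(X)]-E[F(X)]\otimes E[F(X)]$, $\Sigma_{FY}=E[F(X)\otimes(\kappa_Y(\cdot,Y)-E\kappa_Y(\cdot,Y))]$; assume $\operatorname{ran}(\Sigma_{FY})\subseteq\operatorname{ran}(\Sigma_{FF})$; $R_{FY}=\Sigma_{FF}^\dagger\Sigma_{FY}$ where $A^\dagger$ is the inverse of $A|\overline{\operatorname{ran}}(A)$ onto $\operatorname{ran}(A)$; $s(Y)=R_{FY}[\kappa_Y(\cdot,Y)-E\kappa_Y(\cdot,Y)]$. For $\rho\in\mathcal H_U\otimes\mathcal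 H_V$, $T_\rho:\mathcal H_V\to\mathcal H_U$ is the unique bounded linear operator with $\langle f,T_\rho g\rangle_{\mathcal H_U}=\langle fg,\rho\rangle_\otimes$. Define $L(f,g)=\min_{u\in L_2(P_Y)}E\|s(Y)-u(Y)fg\|_\otimes^2$. The CP-sequence of $s(Y)$ is defined recursively: $(f_1,g_1)$ minimizes $L$ over $\mathcal H_U\times\mathcal H_V$; for $k\ge2$, $(f_k,g_k)$ minimizes $L$ over $(\operatorname{span}\{f_1,\ldots,f_{k-1}\})^\perp\times(\operatorname{span}\{g_1,\ldots,g_{k-1}\})^\perp$. Here $d$ denotes the number of steps of the CP-sequence considered, namely $d=\min\{k: L(f_\ell,g_\ell)=0\text{ for all }\ell\ge k\}$. *)

From HB Require Import structures.
From mathcomp Require Import all_boot all_order all_algebra.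
From mathcomp Require Import all_classical all_reals all_analysis.
Set Implicit Arguments. Unset Strict Implicit. Unset Printing Implicit Defensive.
Import Order.TTheory GRing.Theory Num.Theory.
Local Open Scope classical_set_scope.
Local Open Scope ring_scope.

Record inner_space (R : realType) (V : lmodType R) := InnerSpace {
  ip : V -> V -> R;
  ip_sym : forall x y, ip x y = ip y x;
  ip_linl : forall (a : R) x y z, ip (a *: x + y) z = a * ip x z + ip y z;
  ip_ge0 : forall x, 0 <= ip x x;
  ip_eq0 : forall x, ip x x = 0 -> x = 0
}.

Section InnerDefs.
Variables (R : realType) (V : lmodType R) (I : inner_space V).

Definition inorm (x : V) : R := Num.sqrt (ip I x x).

Definition icauchy (u : nat -> V) : Prop :=
  forall e : R, 0 < e -> exists N : nat, forall m n : nat,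
    (N <= m)%N -> (N <= n)%N -> inorm (u m - u n) < e.

Definition iconverges (u : nat -> V) : Prop :=
  exists l : V, forall e : R, 0 < e -> exists N : nat, forall n : nat,
    (N <= n)%N -> inorm (u n - l) < e.

Definition icomplete : Prop := forall u, icauchy u -> iconverges u.

Definition orth_prev (xs : nat -> V) (k : nat) (x : V) : Prop :=
  forall i : nat, (i < k)%N -> ip I x (xs i) = 0.

Definition unit_vec (x : V) : Prop := inorm x = 1.

Definition normalize (x : V) : V := (inorm x)^-1 *: x.
End InnerDefs.

(* W, with the map tens : HU -> HV -> W, (f,g) |-> fg, is the Hilbert tensor
   product HU (x) HV: tens is bilinear, <f1 g1, f2 g2> = <f1,f2><g1,g2>,
   W is complete and the span of the elementary tensors is dense. *)
Definition is_tensor_product (R : realType) (HU HV W : lmodType R)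
  (IU : inner_space HU) (IV : inner_space HV) (IW : inner_space W)
  (tens : HU -> HV -> W) : Prop :=
  [/\ (forall (a : R) f1 f2 g, tens (a *: f1 + f2) g = a *: tens f1 g + tens f2 g),
      (forall (a : R) f g1 g2, tens f (a *: g1 + g2) = a *: tens f g1 + tens f g2),
      (forall f1 g1 f2 g2,
          ip IW (tens f1 g1) (tens f2 g2) = ip IU f1 f2 * ip IV g1 g2),
      icomplete IW &
      (forall (w : W) (e : R), 0 < e -> exists ps : seq (HU * HV),
          inorm IW (w - \sum_(p <- ps) tens p.1 p.2) < e)].

Section Optim.
Variables (R : realType) (HU HV W : lmodType R)
  (IU : inner_space HU) (IV : inner_space HV) (IW : inner_space W)
  (tens : HU -> HV -> W).
Variables (d : measure_display) (OY : measurableType d) (PY : probability OY R).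
Variable s : OY -> W.

Definition L2set : set (OY -> R) :=
  [set u : OY -> R | measurable_fun setT u /\ (\int[PY]_y ((u y) ^+ 2)%:E < +oo)%E].

(* L(f,g) = min_{u in L2(P_Y)} E || s(Y) - u(Y) fg ||^2  (taken as an inf;
   the infimum is attained) *)
Definition cp_cost (f : HU) (g : HV) (u : OY -> R) : \bar R :=
  (\int[PY]_y (ip IW (s y - u y *: tens f g) (s y - u y *: tens f g))%:E)%E.

Definition Lcp (f : HU) (g : HV) : \bar R :=
  ereal_inf (cp_cost f g @` L2set).

(* M(f,g) = E <f, T_{s(Y)} g>^2, where by definition of T_rho,
   <f, T_{s(Y)} g>_{HU} = <fg, s(Y)>_(x). *)
Definition Mcp (f : HU) (g : HV) : \bar R :=
  (\int[PY]_y ((ip IW (tens f g) (s y)) ^+ 2)%:E)%E.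

End Optim.

Definition is_argmin_on (T : Type) (R : realType) (F : T -> \bar R) (S : set T) (x : T) :=
  S x /\ forall y, S y -> (F x <= F y)%E.

Definition is_argmax_on (T : Type) (R : realType) (F : T -> \bar R) (S : set T) (x : T) :=
  S x /\ forall y, S y -> (F y <= F x)%E.

(* For a unit vector [t], minimising [||s y - c t||^2] over the scalar [c] is
   the orthogonal projection of [s y] onto the line through [t]: the minimum
   [||s y||^2 - <t, s y>^2] is attained at [c = <t, s y>], which is
   square-integrable in [y].  For [f, g <> 0] the tensor [fg] is a nonzero
   multiple of the unit tensor [(f/||f||)(g/||g||)], so
   [L(f,g) = E||s(Y)||^2 - M(f/||f||, g/||g||)]; otherwise [fg = 0] and [L(f,g)]
   takes its largest value [E||s(Y)||^2].  As the orthogonality constraints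
   are invariant under nonzero scaling, minimising [L] and maximising [M] over
   unit vectors select the same directions. *)
From mathcomp Require Import all_boot all_order all_algebra.
From mathcomp Require Import all_classical all_reals all_analysis.
From mathcomp Require Import measurable_realfun.
From mathcomp Require Import ring.
Import Order.TTheory GRing.Theory Num.Theory.
Local Open Scope classical_set_scope.
Local Open Scope ring_scope.

Section InnerSpaceTheory.
Context {R : realType} {V : lmodType R} {I : inner_space V}.

Lemma ip0l z : ip I 0 z = 0.
Proof. by have := ip_linl I (-1) 0 0 z; rewrite scaler0 addr0 mulN1r addNr. Qed.

Lemma ipZl a x z : ip I (a *: x) z = a * ip I x z.
Proof. by have := ip_linl I a x 0 z; rewrite !addr0 ip0l addr0. Qed.

Lemma ipBl x y z : ip I (x - y) z = ip I x z - ip I y z.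
Proof. by rewrite -[- y]scaleN1r addrC ip_linl mulN1r addrC. Qed.

Lemma ip_subZ_unit t x v : ip I t t = 1 ->
  ip I (x - v *: t) (x - v *: t) = ip I x x - ip I t x ^+ 2 + (v - ip I t x) ^+ 2.
Proof.
move=> ht; rewrite ipBl ipZl (ip_sym I x) (ip_sym I t) !ipBl !ipZl (ip_sym I x t) ht.
ring.
Qed.

Lemma sqr_ip_unit_le t x : ip I t t = 1 -> ip I t x ^+ 2 <= ip I x x.
Proof.
move=> ht; have := ip_ge0 I (x - ip I t x *: t).
by rewrite ip_subZ_unit // subrr expr0n addr0 subr_ge0.
Qed.

Lemma ip_gt0 x : x != 0 -> 0 < ip I x x.
Proof.
move=> x0; rewrite lt_neqAle ip_ge0 andbT eq_sym.
by apply: contra x0 => /eqP/(ip_eq0 (i:=I))->.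
Qed.

Lemma inorm_gt0 x : x != 0 -> 0 < inorm I x.
Proof. by move=> x0; rewrite sqrtr_gt0 ip_gt0. Qed.

Lemma normalizeK x : x != 0 -> inorm I x *: normalize I x = x.
Proof. by move=> x0; rewrite scalerA mulfV ?scale1r // gt_eqF ?inorm_gt0. Qed.

Lemma ip_normalize x : x != 0 -> ip I (normalize I x) (normalize I x) = 1.
Proof.
move=> x0; rewrite ipZl (ip_sym I) ipZl mulrA -expr2 exprVn sqr_sqrtr ?ip_ge0 //.
by rewrite mulVf // gt_eqF ?ip_gt0.
Qed.

Lemma unit_vec_normalize x : x != 0 -> unit_vec I (normalize I x).
Proof. by move=> x0; rewrite /unit_vec /inorm ip_normalize // sqrtr1. Qed.

Lemma normalize_unit_vec x : unit_vec I x -> normalize I x = x.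
Proof. by rewrite /normalize => ->; rewrite invr1 scale1r. Qed.

Lemma unit_vec_neq0 x : unit_vec I x -> x != 0.
Proof.
rewrite /unit_vec /inorm; apply: contra_eqN => /eqP->.
by rewrite ip0l sqrtr0 eq_sym oner_eq0.
Qed.

End InnerSpaceTheory.

Definition scale_closed {R : realType} {V : lmodType R} (C : set V) :=
  forall (a : R) x, a != 0 -> C x -> C (a *: x).

Section ScaleClosed.
Context {R : realType} {V : lmodType R} {I : inner_space V} {C : set V}.
Hypothesis C_scale : scale_closed C.

Lemma scale_closed_normalize {x} : x != 0 -> C x -> C (normalize I x).
Proof. by move=> x0; apply: C_scale; rewrite invr_eq0 gt_eqF ?inorm_gt0. Qed.

Lemma scale_closed_normalizeV {x} : x != 0 -> C (normalize I x) -> C x.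
Proof.
by move=> x0 /(C_scale (inorm I x)); rewrite normalizeK // gt_eqF ?inorm_gt0 //; apply.
Qed.

End ScaleClosed.

Lemma orth_prev_scale_closed {R : realType} {V : lmodType R} (I : inner_space V) xs k :
  scale_closed (orth_prev I xs k).
Proof. by move=> a x _ xs_x i ik; rewrite ipZl xs_x // mulr0. Qed.

Lemma ereal_inf_attained {R : realType} {T : Type} (F : T -> \bar R) {A : set T} {x : T} :
  A x -> (forall y, A y -> (F x <= F y)%E) -> ereal_inf (F @` A) = F x.
Proof.
move=> Ax Fx_min; apply/le_anti/andP; split.
  by apply: ereal_inf_lbound; exists x.
by apply/ereal_infP => _ [y Ay <-]; exact: Fx_min.
Qed.

Section Tensor.
Context {R : realType} {HU HV W : lmodType R}
  {IU : inner_space HU} {IV : inner_space HV} {IW : inner_space W}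
  {tens : HU -> HV -> W}.
Hypotheses
  (tens_linl : forall (a : R) f1 f2 g, tens (a *: f1 + f2) g = a *: tens f1 g + tens f2 g)
  (tens_linr : forall (a : R) f g1 g2, tens f (a *: g1 + g2) = a *: tens f g1 + tens f g2)
  (ip_tens : forall f1 g1 f2 g2,
     ip IW (tens f1 g1) (tens f2 g2) = ip IU f1 f2 * ip IV g1 g2).

Lemma tens0l g : tens 0 g = 0.
Proof. by have := tens_linl (-1) 0 0 g; rewrite scaler0 addr0 scaleN1r addNr. Qed.

Lemma tens0r f : tens f 0 = 0.
Proof. by have := tens_linr (-1) f 0 0; rewrite scaler0 addr0 scaleN1r addNr. Qed.

Lemma tensZl a f g : tens (a *: f) g = a *: tens f g.
Proof. by rewrite -[a *: f]addr0 tens_linl tens0l addr0. Qed.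

Lemma tensZr a f g : tens f (a *: g) = a *: tens f g.
Proof. by rewrite -[a *: g]addr0 tens_linr tens0r addr0. Qed.

Lemma tens_normalize f g : f != 0 -> g != 0 ->
  tens f g = (inorm IU f * inorm IV g) *: tens (normalize IU f) (normalize IV g).
Proof.
by move=> f0 g0; rewrite -scalerA -tensZr -tensZl !normalizeK.
Qed.

Lemma ip_tens_normalize f g : f != 0 -> g != 0 ->
  ip IW (tens (normalize IU f) (normalize IV g))
        (tens (normalize IU f) (normalize IV g)) = 1.
Proof. by move=> f0 g0; rewrite ip_tens !ip_normalize // mulr1. Qed.

End Tensor.

Section ProjectionCost.
Context {R : realType} {W : lmodType R} {IW : inner_space W}
  {d : measure_display} {OY : measurableType d} {PY : probability OY R}
  {s : OY -> W}.
Hypotheses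
  (s_meas : forall w : W, measurable_fun setT (fun y => ip IW (s y) w))
  (s_sqr_meas : measurable_fun setT (fun y => ip IW (s y) (s y)))
  (s_L2 : (\int[PY]_y (ip IW (s y) (s y))%:E < +oo)%E).

Local Notation Es2 := (\int[PY]_y (ip IW (s y) (s y))%:E)%E.

Lemma measurable_ip_s t : measurable_fun setT (fun y => ip IW t (s y)).
Proof. by under eq_fun do rewrite ip_sym; exact: s_meas. Qed.

Lemma integrable_sqr_s : PY.-integrable setT (EFin \o (fun y => ip IW (s y) (s y))).
Proof.
apply/integrableP; split; first exact/measurable_EFinP.
by rewrite (eq_integral (fun y => (ip IW (s y) (s y))%:E)) // => y _;
  rewrite /= ger0_norm ?ip_ge0.
Qed.

Lemma Es2_fin_num : Es2 \is a fin_num.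
Proof. exact: integrable_fin_num integrable_sqr_s. Qed.

Lemma integrable_sqr_ip_s t : ip IW t t = 1 ->
  PY.-integrable setT (EFin \o (fun y => ip IW t (s y) ^+ 2)).
Proof.
move=> ht; apply: le_integrable integrable_sqr_s => //.
  by apply/measurable_EFinP/measurable_funX; exact: measurable_ip_s.
by move=> y _ /=; rewrite lee_fin !ger0_norm ?sqr_ge0 ?ip_ge0 ?sqr_ip_unit_le.
Qed.

Lemma L2set_cst0 : L2set PY (fun _ => 0).
Proof.
split; first exact: measurable_cst.
by under eq_integral do rewrite expr0n; rewrite integral0 ltry.
Qed.

Lemma Lcp_tens0 (HU HV : lmodType R) (tens : HU -> HV -> W) f g :
  tens f g = 0 -> Lcp IW tens PY s f g = Es2.
Proof.
move=> fg0; have cost u : cp_cost IW tens PY s f g u = Es2.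
  by apply: eq_integral => y _; rewrite fg0 scaler0 subr0.
by rewrite /Lcp (ereal_inf_attained _ L2set_cst0) // => u _; rewrite !cost.
Qed.

Lemma Lcp_tens_unit {HU HV : lmodType R} {tens : HU -> HV -> W} {f g a t} :
  tens f g = a *: t -> ip IW t t = 1 -> a != 0 ->
  Lcp IW tens PY s f g = (Es2 - \int[PY]_y (ip IW t (s y) ^+ 2)%:E)%E.
Proof.
move=> fg_at ht a0.
pose c y := ip IW t (s y).
have cost u : cp_cost IW tens PY s f g u =
    (\int[PY]_y (ip IW (s y) (s y) - c y ^+ 2 + (u y * a - c y) ^+ 2)%:E)%E.
  by apply: eq_integral => y _; rewrite fg_at scalerA ip_subZ_unit.
have c_meas : measurable_fun setT c := measurable_ip_s t.
pose u0 y := c y / a.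
have u0_L2 : L2set PY u0.
  split; first exact: measurable_funM.
  under eq_integral do rewrite /u0 exprMn EFinM muleC.
  rewrite integralZl //; last exact: integrable_sqr_ip_s.
  have c2_fin := integrable_fin_num measurableT (integrable_sqr_ip_s _ ht).
  by rewrite -(fineK c2_fin) -EFinM ltry.
rewrite /Lcp (ereal_inf_attained _ u0_L2).
  rewrite cost /u0; under eq_integral do rewrite divfK // subrr expr0n addr0 EFinB.
  exact: integralB_EFin integrable_sqr_s (integrable_sqr_ip_s _ ht).
have integrand_meas (u : OY -> R) : measurable_fun setT u -> measurable_fun setT
    (fun y => (ip IW (s y) (s y) - c y ^+ 2 + (u y * a - c y) ^+ 2)%:E).
  move=> u_meas; apply/measurable_EFinP/measurable_funD.
    exact/measurable_funB/measurable_funX.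
  exact/measurable_funX/measurable_funB/c_meas/measurable_funM.
move=> u [u_meas _]; rewrite !cost; apply: ge0_le_integral => //.
- by move=> y _; rewrite /u0 divfK // subrr expr0n addr0 lee_fin subr_ge0 sqr_ip_unit_le.
- exact/integrand_meas/measurable_funM.
- exact: integrand_meas.
- by move=> y _; rewrite lee_fin lerD2l /u0 divfK // subrr expr0n sqr_ge0.
Qed.

End ProjectionCost.

Section CPEquivalence.
Context {R : realType} {HU HV W : lmodType R}
  {IU : inner_space HU} {IV : inner_space HV} {IW : inner_space W}
  {tens : HU -> HV -> W}
  {d : measure_display} {OY : measurableType d} {PY : probability OY R}
  {s : OY -> W} {CU : set HU} {CV : set HV}.
Hypotheses
  (tens_linl : forall (a : R) f1 f2 g, tens (a *: f1 + f2) g = a *: tens f1 g + tens f2 g)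
  (tens_linr : forall (a : R) f g1 g2, tens f (a *: g1 + g2) = a *: tens f g1 + tens f g2)
  (ip_tens : forall f1 g1 f2 g2,
     ip IW (tens f1 g1) (tens f2 g2) = ip IU f1 f2 * ip IV g1 g2)
  (s_meas : forall w : W, measurable_fun setT (fun y => ip IW (s y) w))
  (s_sqr_meas : measurable_fun setT (fun y => ip IW (s y) (s y)))
  (s_L2 : (\int[PY]_y (ip IW (s y) (s y))%:E < +oo)%E)
  (CU_scale : scale_closed CU) (CV_scale : scale_closed CV).

Local Notation Es2 := (\int[PY]_y (ip IW (s y) (s y))%:E)%E.
Local Notation L := (Lcp IW tens PY s).
Local Notation M := (Mcp IW tens PY s).

Lemma Lcp_normalize f g : f != 0 -> g != 0 ->
  L f g = (Es2 - M (normalize IU f) (normalize IV g))%E.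
Proof.
move=> f0 g0.
have fg_unit := tens_normalize (IU:=IU) (IV:=IV) tens_linl tens_linr f g f0 g0.
rewrite (Lcp_tens_unit s_meas s_sqr_meas s_L2 fg_unit) //.
  exact: ip_tens_normalize.
by rewrite mulf_neq0 // gt_eqF ?inorm_gt0.
Qed.

Lemma Lcp_degenerate f g : (f == 0) || (g == 0) -> L f g = Es2.
Proof.
by case/orP=> /eqP->; apply: Lcp_tens0; [exact: tens0l | exact: tens0r].
Qed.

Lemma Mcp_ge0 f g : (0 <= M f g)%E.
Proof. by apply: integral_ge0 => y _; rewrite lee_fin sqr_ge0. Qed.

Lemma argmax_Mcp_of_argmin_Lcp f g : f != 0 -> g != 0 ->
  is_argmin_on (fun p : HU * HV => L p.1 p.2) [set p | CU p.1 /\ CV p.2] (f, g) ->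
  is_argmax_on (fun p : HU * HV => M p.1 p.2)
    [set p | unit_vec IU p.1 /\ CU p.1 /\ unit_vec IV p.2 /\ CV p.2]
    (normalize IU f, normalize IV g).
Proof.
move=> f0 g0 [[/= CUf CVg] L_min]; split.
  by do !split; [exact: unit_vec_normalize | exact: scale_closed_normalize
    | exact: unit_vec_normalize | exact: scale_closed_normalize].
move=> [f' g'] /= [uf' [CUf' [ug' CVg']]].
have := L_min (f', g') (conj CUf' CVg').
rewrite /= !Lcp_normalize ?(unit_vec_neq0 f' uf') ?(unit_vec_neq0 g' ug') //.
rewrite (normalize_unit_vec f' uf') (normalize_unit_vec g' ug').
by rewrite leeD2lE ?Es2_fin_num // leeN2.
Qed.

Lemma argmin_Lcp_of_argmax_Mcp f g : f != 0 -> g != 0 ->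
  is_argmax_on (fun p : HU * HV => M p.1 p.2)
    [set p | unit_vec IU p.1 /\ CU p.1 /\ unit_vec IV p.2 /\ CV p.2]
    (normalize IU f, normalize IV g) ->
  is_argmin_on (fun p : HU * HV => L p.1 p.2) [set p | CU p.1 /\ CV p.2] (f, g).
Proof.
move=> f0 g0 [[/= _ [CUf [_ CVg]]] M_max]; split.
  by split=> /=; [exact: (scale_closed_normalizeV CU_scale f0 CUf)
               | exact: (scale_closed_normalizeV CV_scale g0 CVg)].
move=> [f' g'] /= [CUf' CVg']; rewrite Lcp_normalize //.
have [deg | /norP[f'0 g'0]] := boolP ((f' == 0) || (g' == 0)).
  by rewrite Lcp_degenerate // geeDl // oppe_le0 Mcp_ge0.
rewrite Lcp_normalize // leeD2lE ?Es2_fin_num // leeN2.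
by apply: (M_max (_, _)); do !split;
  [exact: unit_vec_normalize | exact: scale_closed_normalize
  | exact: unit_vec_normalize | exact: scale_closed_normalize].
Qed.

End CPEquivalence.

Theorem proposition3 (R : realType) (HU HV W : lmodType R)
  (IU : inner_space HU) (IV : inner_space HV) (IW : inner_space W)
  (tens : HU -> HV -> W)
  (htens : is_tensor_product IU IV IW tens)
  (d : measure_display) (OY : measurableType d) (PY : probability OY R)
  (s : OY -> W)
  (hs_meas : forall w : W, measurable_fun setT (fun y => ip IW (s y) w))
  (hs_nmeas : measurable_fun setT (fun y => ip IW (s y) (s y)))
  (hs_L2 : (\int[PY]_y (ip IW (s y) (s y))%:E < +oo)%E)
  (fs : nat -> HU) (gs : nat -> HV) (k : nat)
  (f : HU) (g : HV) (hf : f != 0) (hg : g != 0) :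
  is_argmin_on (fun p : HU * HV => Lcp IW tens PY s p.1 p.2)
    [set p | orth_prev IU fs k p.1 /\ orth_prev IV gs k p.2] (f, g)
  <->
  is_argmax_on (fun p : HU * HV => Mcp IW tens PY s p.1 p.2)
    [set p | unit_vec IU p.1 /\ orth_prev IU fs k p.1 /\
             unit_vec IV p.2 /\ orth_prev IV gs k p.2]
    (normalize IU f, normalize IV g).
Proof.
case: htens => tens_linl tens_linr ip_tens _ _.
have orthU := orth_prev_scale_closed IU fs k.
have orthV := orth_prev_scale_closed IV gs k.
split.
- exact: (argmax_Mcp_of_argmin_Lcp tens_linl tens_linr ip_tens
            hs_meas hs_nmeas hs_L2 orthU orthV).
- exact: (argmin_Lcp_of_argmax_Mcp tens_linl tens_linr ip_tens
            hs_meas hs_nmeas hs_L2 orthU orthV).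
Qed.
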